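(* Consider a rate-$1/2$ binary convolutional code $\mathcal{C}$ whose two coded bits $[c_{1,t},c_{2,t}]$ at each time $t$ are mapped, without any interleaving, to one 4-PAM symbol (BICM-T), transmitted over a real AWGN channel with signal-to-noise ratio $\gamma=1/N_0$, and decoded by a soft-input Viterbi decoder treating the two L-values per time instant as independent. Model the per-time-instant decoding metrics by the Gaussian (zero-crossing) approximations $$\mathrm{p}_1(\lambda)=\tfrac12\big[\psi(\lambda;-3\alpha,2\alpha)+\psi(\lambda;-\alpha,2\alpha)\big],\quad \mathrm{p}_2(\lambda)=\psi(\lambda;-\alpha,2\alpha),\quad \mathrm{p}_\Sigma(\lambda)=\psi(\lambda;-4\alpha,8\alpha),$$ where $\alpha=4\gamma\Delta^2$, $\Delta=1/\sqrt5$, and $\psi(\lambda;\mu,\sigma^2)=\frac{1}{\sqrt{2\pi\sigma^2}}\exp\!\big(-\frac{(\lambda-\mu)^2}{2\sigma^2}\big)$. Define $$\mathrm{PEP}_{\mathrm T}(w_1,w_2,w_\Sigma)=\int_0^\infty \{\mathrm{p}_1\}^{*w_1}*\{\mathrm{p}_2\}^{*w_2}*\{\mathrm{p}_\Sigma\}^{*w_\Sigma}(\lambda)\,d\lambda$$ and $\mathrm{UB}_{\mathrm T}=\sum_{w_1,w_2,w_\Sigma}\beta^{\mathcal C}_{w_1,w_2,w_\Sigma}\,\mathrm{PEP}_{\mathrm T}(w_1,w_2,w_\Sigma)$. Then $$\mathrm{UB}_{\mathrm T}=\sum_{w_1,w_2,w_\Sigma}\beta^{\mathcal C}_{w_1,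w_2,w_\Sigma}\left(\tfrac12\right)^{w_1}\sum_{j=0}^{w_1}\binom{w_1}{j}\,Q\!\left(\sqrt{\frac{(w_1+w_2+4w_\Sigma+2j)^2}{w_1+w_2+4w_\Sigma}\cdot\frac{2\gamma}{5}}\right).$$
   Context: The 4-PAM constellation is $\{-3\Delta,-\Delta,\Delta,3\Delta\}$ with $\Delta=1/\sqrt5$ (unit average energy), labeled by the binary reflected Gray code $[1,1]\mapsto-3\Delta$, $[1,0]\mapsto-\Delta$, $[0,0]\mapsto\Delta$, $[0,1]\mapsto3\Delta$; the noise has variance $N_0/2$. An error event $\mathbf E=[\mathbf e_1^{T},\dots,\mathbf e_T^{T}]$ is a $2\times T$ binary matrix that is the codeword of a trellis path diverging from the zero state and remerging with it after $T$ stages; $\mathbf i_{\mathbf E}$ is the corresponding input sequence and $d_H(\mathbf i_{\mathbf E})$ its Hamming weight. For an error event, $w_{\mathbf E,1}$ (resp. $w_{\mathbf E,2}$) is the number of columns equal to $[1,0]^T$ (resp. $[0,1]^T$), and $w_{\mathbf E,\Sigma}$ is the number of columns equal to $[1,1]^T$. The spectrum $\beta^{\mathcal C}_{w_1,w_2,w_\Sigma}$ is the sum of $d_H(\mathbf i_{\mathbf E})$ over all error events with $(w_{\mathbf E,1},w_{\mathbf E,2},w_{\mathbf E,\Sigma})=(w_1,w_2,w_\Sigma)$. $\{p\}^{*w}$ denotes the $w$-fold self-convolution, $*$ convolution, and $Q(x)=\frac1{\sqrt{2\pi}}\int_x^\infty e^{-u^2/2}du$. *)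

From HB Require Import structures.
From mathcomp Require Import all_boot all_order all_algebra.
From mathcomp Require Import all_classical all_reals all_analysis.
Set Implicit Arguments. Unset Strict Implicit. Unset Printing Implicit Defensive.
Import Order.TTheory GRing.Theory Num.Theory.
Import numFieldNormedType.Exports.
Local Open Scope classical_set_scope.
Local Open Scope ring_scope.

Section Defs.
Variable R : realType.
Local Notation mu := (@lebesgue_measure R).

Definition psi (l m s2 : R) : R :=
  expR (- (l - m) ^+ 2 / (2 * s2)) / Num.sqrt (2 * pi * s2).

Definition Qfun (x : R) : R :=
  Rintegral mu `[x, +oo[ (fun u => expR (- u ^+ 2 / 2) / Num.sqrt (2 * pi)).

Definition conv (f g : R -> R) (x : R) : R :=
  Rintegral mu setT (fun y => f y * g (x - y)).

Fixpoint convl (f : R -> R) (fs : seq (R -> R)) : R -> R :=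
  match fs with
  | [::] => f
  | g :: gs => conv f (convl g gs)
  end.

Definition Delta : R := (Num.sqrt 5)^-1.
Definition alpha (gamma : R) : R := 4 * gamma * Delta ^+ 2.

Definition p1 (gamma : R) (l : R) : R :=
  2^-1 * (psi l (- 3 * alpha gamma) (2 * alpha gamma)
          + psi l (- alpha gamma) (2 * alpha gamma)).
Definition p2 (gamma : R) (l : R) : R := psi l (- alpha gamma) (2 * alpha gamma).
Definition pS (gamma : R) (l : R) : R := psi l (- 4 * alpha gamma) (8 * alpha gamma).

(* {p1}^{*w1} * {p2}^{*w2} * {pS}^{*wS}, as a list of factors *)
Definition factors (gamma : R) (w1 w2 wS : nat) : seq (R -> R) :=
  nseq w1 (p1 gamma) ++ nseq w2 (p2 gamma) ++ nseq wS (pS gamma).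

(* PEP_T(w1,w2,wS) = int_0^oo of the convolution (only meaningful when
   w1 + w2 + wS >= 1) *)
Definition PEP_T (gamma : R) (w1 w2 wS : nat) : R :=
  match factors gamma w1 w2 wS with
  | [::] => 0
  | f :: fs => Rintegral mu `[0, +oo[ (convl f fs)
  end.

Definition PEP_closed (gamma : R) (w1 w2 wS : nat) : R :=
  let n : R := (w1 + w2 + 4 * wS)%:R in
  (2^-1) ^+ w1 * \sum_(j < w1.+1)
     ('C(w1, j))%:R * Qfun (Num.sqrt ((n + 2 * j%:R) ^+ 2 / n * (2 * gamma / 5))).
End Defs.

(* ---- Rate-1/2 binary convolutional code, given by its trellis:
   a finite-state encoder with zero state s0, next-state function nxt
   and output function out (one input bit, two coded bits [c1; c2]). *)
Record conv_code := ConvCode {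
  cstate : finType;
  s0 : cstate;
  nxt : cstate -> bool -> cstate;
  out : cstate -> bool -> bool * bool
}.

Section Code.
Variable C : conv_code.

Fixpoint states (s : cstate C) (i : seq bool) : seq (cstate C) :=
  match i with
  | [::] => [::]
  | b :: i' => nxt s b :: states (nxt s b) i'
  end.

Fixpoint columns (s : cstate C) (i : seq bool) : seq (bool * bool) :=
  match i with
  | [::] => [::]
  | b :: i' => out s b :: columns (nxt s b) i'
  end.

(* i is the input of an error event: the trellis path starting at the zero
   state diverges from the all-zero path at the first stage (first input
   bit 1), does not visit the zero state at stages 1..T-1 and remerges with
   the zero state after the T-th stage. *)
Definition error_event (i : seq bool) : Prop :=
  let st := states (s0 C) i in
  [/\ (0 < size i)%N, head false i = true,
      last (s0 C) st = s0 C &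
      forall k, (k < (size i).-1)%N -> nth (s0 C) st k != s0 C].

Definition wE1 (i : seq bool) : nat := count (pred1 (true, false)) (columns (s0 C) i).
Definition wE2 (i : seq bool) : nat := count (pred1 (false, true)) (columns (s0 C) i).
Definition wES (i : seq bool) : nat := count (pred1 (true, true)) (columns (s0 C) i).
Definition dH (i : seq bool) : nat := count id i.

(* spectrum beta^C_{w1,w2,wS} (an extended nonnegative real, possibly +oo) *)
Definition beta (R : realType) (w1 w2 wS : nat) : \bar R :=
  (\esum_(i in [set i | error_event i /\ wE1 i = w1 /\ wE2 i = w2 /\ wES i = wS])
     ((dH i)%:R)%:E)%E.
End Code.

From Pilot Require Import Defs.
From HB Require Import structures.
From mathcomp Require Import all_boot all_order all_algebra.
From mathcomp Require Import all_classical all_reals all_analysis.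
From mathcomp Require Import ring zify measurable_realfun.
Import Order.TTheory GRing.Theory Num.Theory.
Import numFieldNormedType.Exports.
Local Open Scope classical_set_scope.
Local Open Scope ring_scope.

(* Every metric density is a binomial mixture of Gaussians
     binmix a w n = 2^-w \sum_j C(w, j) psi(.; -a (n + 2 j), 2 a n),
   namely p1 = binmix 1 1, p2 = binmix 0 1 and pS = binmix 0 4 with a = alpha.
   Convolution of Gaussians adds means and variances, and the binomial weights
   then recombine by Vandermonde's identity, so for n, n' > 0
   binmix w n * binmix w' n' = binmix (w + w') (n + n').  Hence the convolution in PEP_T is
   binmix w1 (w1 + w2 + 4 wS), and the mass of each of its Gaussian components
   on [0, +oo[ is a value of Q after the change of variables u = (x - m)/sqrt s.
   The two series then agree term by term. *)

Section Gaussian.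
Context {R : realType}.
Local Notation mu := (@lebesgue_measure R).
Implicit Types (x y m s : R).

Lemma psi_normal_pdf x m s : 0 < s -> psi x m s = normal_pdf m (Num.sqrt s) x.
Proof.
move=> s_gt0.
rewrite /normal_pdf gt_eqF ?sqrtr_gt0 // /normal_peak /normal_fun.
rewrite sqr_sqrtr ?ltW // /psi mulrC.
have -> : s *+ 2 = 2 * s by rewrite mulr_natl.
by have -> : s * pi *+ 2 = 2 * pi * s by rewrite -mulr_natl mulrCA [s * _]mulrC.
Qed.

Lemma psiE m s : 0 < s -> (fun x => psi x m s) = normal_pdf m (Num.sqrt s).
Proof. by move=> s_gt0; apply/funext => x; rewrite psi_normal_pdf. Qed.

Lemma psi_ge0 x m s : 0 <= psi x m s.
Proof. by rewrite /psi divr_ge0 ?expR_ge0 ?sqrtr_ge0. Qed.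

Lemma measurable_psi m s : 0 < s -> measurable_fun setT (fun x => psi x m s).
Proof. by move=> s_gt0; rewrite psiE //; exact: measurable_normal_pdf. Qed.

Lemma continuous_psi m s : 0 < s -> continuous (fun x => psi x m s).
Proof.
by move=> s_gt0; rewrite psiE //; apply: continuous_normal_pdf; rewrite gt_eqF ?sqrtr_gt0.
Qed.

Lemma integral_psi m s : 0 < s -> (\int[mu]_x (psi x m s)%:E = 1)%E.
Proof.
move=> s_gt0; under eq_integral do rewrite psi_normal_pdf //.
exact: integral_normal_pdf.
Qed.

Lemma psi_mul_psiB x y m1 m2 s1 s2 : 0 < s1 -> 0 < s2 ->
  psi y m1 s1 * psi (x - y) m2 s2 =
  psi x (m1 + m2) (s1 + s2) *
  psi y ((m1 * s2 + (x - m2) * s1) / (s1 + s2)) (s1 * s2 / (s1 + s2)).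
Proof.
move=> s1_gt0 s2_gt0; have s12_gt0 : 0 < s1 + s2 by rewrite addr_gt0.
rewrite /psi !mulf_div -!expRD -!sqrtrM ?mulr_ge0 ?pi_ge0 ?ltW //.
congr (expR _ / Num.sqrt _); field.
  by rewrite !gt_eqF.
by rewrite gt_eqF.
Qed.

Lemma ge0_integral_psi_mix (I : finType) (D : set R) (a m s : I -> R) :
  measurable D -> (forall i, 0 <= a i) -> (forall i, 0 < s i) ->
  (\int[mu]_(x in D) (\sum_i a i * psi x (m i) (s i))%:E =
   \sum_i (a i)%:E * \int[mu]_(x in D) (psi x (m i) (s i))%:E)%E.
Proof.
move=> mD a_ge0 s_gt0.
under eq_integral do rewrite -sumEFin.
rewrite ge0_integral_sum //; last 2 first.
- move=> i; apply/measurable_EFinP; apply: measurable_funM => //.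
  by apply: measurable_funTS; apply: measurable_psi.
- by move=> i x _; rewrite lee_fin mulr_ge0 ?psi_ge0.
apply: eq_bigr => i _; under eq_integral do rewrite EFinM.
rewrite ge0_integralZl ?lee_fin //.
  by apply/measurable_EFinP; apply: measurable_funTS; apply: measurable_psi.
by move=> x _; rewrite lee_fin psi_ge0.
Qed.

Lemma conv_psi_mix (I J : finType) (a m s : I -> R) (b n t : J -> R) x :
  (forall i, 0 <= a i) -> (forall i, 0 < s i) ->
  (forall j, 0 <= b j) -> (forall j, 0 < t j) ->
  Defs.conv (fun y => \sum_i a i * psi y (m i) (s i))
       (fun y => \sum_j b j * psi y (n j) (t j)) x =
  \sum_i \sum_j a i * b j * psi x (m i + n j) (s i + t j).
Proof.
move=> a_ge0 s_gt0 b_ge0 t_gt0.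
pose c (p : I * J) := a p.1 * b p.2 * psi x (m p.1 + n p.2) (s p.1 + t p.2).
pose mean (p : I * J) := (m p.1 * t p.2 + (x - n p.2) * s p.1) / (s p.1 + t p.2).
pose var (p : I * J) := s p.1 * t p.2 / (s p.1 + t p.2).
have c_ge0 p : 0 <= c p by rewrite !mulr_ge0 ?psi_ge0.
have var_gt0 p : 0 < var p by rewrite divr_gt0 ?mulr_gt0 ?addr_gt0.
have integrandE y : (\sum_i a i * psi y (m i) (s i)) *
    (\sum_j b j * psi (x - y) (n j) (t j)) = \sum_p c p * psi y (mean p) (var p).
  transitivity (\sum_i \sum_j c (i, j) * psi y (mean (i, j)) (var (i, j))).
    rewrite mulr_suml; apply: eq_bigr => i _.
    rewrite mulr_sumr; apply: eq_bigr => j _.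
    by rewrite mulrACA psi_mul_psiB // /c !mulrA.
  by rewrite pair_bigA; apply: eq_bigr => -[].
rewrite /Defs.conv /Rintegral; under eq_integral do rewrite integrandE.
rewrite ge0_integral_psi_mix //; under eq_bigr do rewrite integral_psi // mule1.
by rewrite sumEFin /= pair_bigA.
Qed.

Lemma integral_psi_tail m s : 0 < s ->
  (\int[mu]_(x in `[0%R, +oo[) (psi x m s)%:E = (Qfun (- m / Num.sqrt s))%:E)%E.
Proof.
move=> s_gt0; have sqrt_gt0 : 0 < Num.sqrt s by rewrite sqrtr_gt0.
pose F x := (x - m) / Num.sqrt s.
have F'E : F^`()%classic = cst (Num.sqrt s)^-1.
  apply/funext => x; rewrite /F derive1E deriveM// deriveD// derive_cst scaler0.
  by rewrite add0r derive_id derive_cst addr0 scaler1.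
have psiF x : psi x m s = psi (F x) 0 1 * (Num.sqrt s)^-1.
  rewrite /psi /F subr0 !mulr1 expr_div_n sqr_sqrtr ?ltW //.
  rewrite (@sqrtrM _ (2 * pi) s) ?mulr_ge0 ?pi_ge0 //.
  by rewrite -[RHS]mulrA -invfM; congr (expR _ / _); field; rewrite gt_eqF.
have QfunE : Qfun (F 0) = Rintegral mu `[F 0, +oo[ (fun u => psi u 0 1).
  by congr Rintegral; apply/funext => u; rewrite /psi subr0 !mulr1.
have -> : (\int[mu]_(x in `[0%R, +oo[) (psi x m s)%:E = \int[mu]_(x in `[0%R, +oo[)
    ((((fun u => psi u 0 1) \o F) * F^`()%classic) x)%:E)%E.
  by apply: eq_integral => x _; rewrite F'E psiF.
rewrite -increasing_ge0_integration_by_substitutiony.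
- have -> : - m / Num.sqrt s = F 0 by rewrite /F sub0r.
  rewrite QfunE /Rintegral fineK // ge0_fin_numE.
    apply: (le_lt_trans (y := (\int[mu]_x (psi x 0 1)%:E)%E)); last first.
      by rewrite integral_psi // ltry.
    apply: ge0_subset_integral => //; last by move=> x _; rewrite lee_fin psi_ge0.
    by apply/measurable_EFinP; exact: measurable_psi.
  by apply: integral_ge0 => x _; rewrite lee_fin psi_ge0.
- by move=> x y _ _ xy; rewrite /F ltr_pM2r ?invr_gt0 // ltrD2r.
- by rewrite F'E => ? _; exact: cst_continuous.
- by rewrite F'E; exact: is_cvg_cst.
- by rewrite F'E; exact: is_cvg_cst.
- split; first by move=> x _; rewrite /F.
  apply: cvg_at_right_filter; apply: cvgM; last exact: cvg_cst.
  by apply: cvgB; [exact: cvg_id | exact: cvg_cst].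
- by apply/gt0_cvgMly; [rewrite invr_gt0 | exact: cvg_addrr].
- by apply: continuous_subspaceT; exact: continuous_psi.
- by move=> ? _; exact: psi_ge0.
Qed.

End Gaussian.

Section BinomialSums.
Variable V : nmodType.

Lemma sum_binS w (h : nat -> V) :
  \sum_(j < w.+2) h j *+ 'C(w.+1, j) = \sum_(j < w.+1) (h j + h j.+1) *+ 'C(w, j).
Proof.
rewrite big_ord_recl bin0 mulr1n.
under eq_bigr => j _ do rewrite lift0 binS mulrnDr.
rewrite big_split /= addrA; under [RHS]eq_bigr do rewrite mulrnDl.
rewrite big_split /=; congr (_ + _).
rewrite [RHS]big_ord_recl bin0 mulr1n; congr (_ + _).
by rewrite big_ord_recr /= bin_small // mulr0n addr0.
Qed.

Lemma sum_bin_convolution v w (f : nat -> V) :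
  \sum_(i < v.+1) (\sum_(j < w.+1) f (i + j)%N *+ 'C(w, j)) *+ 'C(v, i) =
  \sum_(k < (v + w).+1) f k *+ 'C(v + w, k).
Proof.
elim: v f => [|v IHv] f; first by rewrite big_ord1 bin0 mulr1n.
rewrite (sum_binS _ (fun i => \sum_(j < w.+1) f (i + j)%N *+ 'C(w, j))).
under eq_bigr do rewrite mulrnDl.
rewrite big_split /= IHv.
under [X in _ + X]eq_bigr => i _ do under eq_bigr do rewrite addSn.
rewrite (IHv (fun k => f k.+1)) -big_split addSn sum_binS.
by apply: eq_bigr => k _; rewrite mulrnDl.
Qed.

End BinomialSums.

Section BinomialGaussianMixture.
Context {R : realType} (a : R).
Hypothesis a_gt0 : 0 < a.
Local Notation mu := (@lebesgue_measure R).

Definition binmix (w n : nat) (x : R) : R :=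
  (2^-1) ^+ w *
  \sum_(j < w.+1) 'C(w, j)%:R * psi x (- a * (n%:R + 2 * j%:R)) (2 * a * n%:R).

Lemma binmixE w n : binmix w n = fun x =>
  \sum_(j < w.+1) ((2^-1) ^+ w * 'C(w, j)%:R) *
    psi x (- a * (n%:R + 2 * j%:R)) (2 * a * n%:R).
Proof. by apply/funext => x; rewrite /binmix mulr_sumr; under eq_bigr do rewrite mulrA. Qed.

Lemma conv_binmix v w m n : (0 < m)%N -> (0 < n)%N ->
  Defs.conv (binmix v m) (binmix w n) = binmix (v + w)%N (m + n)%N.
Proof.
move=> m_gt0 n_gt0; apply/funext => x.
have var_gt0 k : (0 < k)%N -> 0 < 2 * a * k%:R by move=> k_gt0; rewrite !mulr_gt0 ?ltr0n.
rewrite [binmix v m]binmixE [binmix w n]binmixE conv_psi_mix; last 4 first.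
- by move=> i; rewrite mulr_ge0 ?exprn_ge0 ?invr_ge0 ?ler0n.
- by move=> i; exact: var_gt0.
- by move=> j; rewrite mulr_ge0 ?exprn_ge0 ?invr_ge0 ?ler0n.
- by move=> j; exact: var_gt0.
pose f k := psi x (- a * ((m + n)%:R + 2 * k%:R)) (2 * a * (m + n)%:R).
rewrite /binmix.
under [in RHS]eq_bigr do rewrite mulr_natl.
rewrite -(sum_bin_convolution _ v w f) exprD mulr_sumr; apply: eq_bigr => i _.
rewrite -[X in _ = _ * X]mulr_natl !mulr_sumr; apply: eq_bigr => j _.
rewrite -[X in _ = _ * (_ * X)]mulr_natl.
have -> : - a * (m%:R + 2 * i%:R) + - a * (n%:R + 2 * j%:R) =
    - a * ((m + n)%:R + 2 * (i + j)%N%:R) by rewrite !natrD; ring.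
have -> : 2 * a * m%:R + 2 * a * n%:R = 2 * a * (m + n)%:R by rewrite natrD; ring.
by rewrite -/(f (i + j)%N); ring.
Qed.

Lemma convl_binmix (p : nat * nat) (s : seq (nat * nat)) :
  all (fun q => 0 < q.2)%N (p :: s) ->
  convl (binmix p.1 p.2) [seq binmix q.1 q.2 | q <- s] =
  binmix (sumn (map fst (p :: s))) (sumn (map snd (p :: s))).
Proof.
elim: s p => [|q s IHs] [v m] /=; first by rewrite !addn0.
move=> /and3P[m_gt0 q_gt0 s_gt0]; rewrite IHs /= ?q_gt0 //.
by rewrite conv_binmix // addn_gt0 q_gt0.
Qed.

Lemma Rintegral_binmix_tail w n : (0 < n)%N ->
  Rintegral mu `[0%R, +oo[ (binmix w n) = (2^-1) ^+ w *
    \sum_(j < w.+1) 'C(w, j)%:R * Qfun (a * (n%:R + 2 * j%:R) / Num.sqrt (2 * a * n%:R)).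
Proof.
move=> n_gt0; have var_gt0 : 0 < 2 * a * n%:R by rewrite !mulr_gt0 ?ltr0n.
rewrite binmixE /Rintegral ge0_integral_psi_mix //.
under eq_bigr do rewrite integral_psi_tail // -EFinM.
rewrite sumEFin /= mulr_sumr; apply: eq_bigr => j _.
by rewrite !mulNr opprK mulrA.
Qed.

End BinomialGaussianMixture.

Section PairwiseErrorProbability.
Context {R : realType} (gamma : R).
Hypothesis gamma_gt0 : 0 < gamma.

Lemma alphaE : alpha gamma = 4 * gamma / 5.
Proof. by rewrite /alpha /Delta exprVn sqr_sqrtr ?ler0n. Qed.

Lemma alpha_gt0 : 0 < alpha gamma.
Proof. by rewrite alphaE divr_gt0 ?mulr_gt0. Qed.

Lemma p1E : p1 gamma = binmix (alpha gamma) 1 1.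
Proof.
apply/funext => x; rewrite /p1 /binmix big_ord_recl big_ord1 /= expr1 bin0 bin1 !mul1r.
rewrite (_ : bump 0 0 = 1%N) // mulr0 addr0 !mulr1 addrC.
by rewrite (_ : - alpha gamma * (1 + 2) = -3 * alpha gamma) //; ring.
Qed.

Lemma p2E : p2 gamma = binmix (alpha gamma) 0 1.
Proof.
apply/funext => x; rewrite /p2 /binmix big_ord1 expr0 bin0 !mul1r.
by rewrite mulr0 addr0 !mulr1.
Qed.

Lemma pSE : pS gamma = binmix (alpha gamma) 0 4.
Proof.
apply/funext => x; rewrite /pS /binmix big_ord1 expr0 bin0 !mul1r.
rewrite mulr0 addr0 (_ : 2 * alpha gamma * 4 = 8 * alpha gamma); last by ring.
by rewrite (_ : - alpha gamma * 4 = -4 * alpha gamma) //; ring.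
Qed.

Lemma factorsE w1 w2 wS : factors gamma w1 w2 wS =
  [seq binmix (alpha gamma) q.1 q.2
     | q <- nseq w1 (1, 1) ++ nseq w2 (0, 1) ++ nseq wS (0, 4)]%N.
Proof. by rewrite /factors !map_cat !map_nseq /= p1E p2E pSE. Qed.

Lemma binmix_tail_argE n j : (0 < n)%N ->
  alpha gamma * (n%:R + 2 * j%:R) / Num.sqrt (2 * alpha gamma * n%:R) =
  Num.sqrt ((n%:R + 2 * j%:R) ^+ 2 / n%:R * (2 * gamma / 5)).
Proof.
move=> n_gt0; have a_gt0 := alpha_gt0.
have var_gt0 : 0 < 2 * alpha gamma * n%:R.
  by apply: mulr_gt0; [apply: mulr_gt0 | rewrite ltr0n].
have mean_ge0 : 0 <= n%:R + 2 * j%:R :> R by rewrite addr_ge0 ?mulr_ge0 ?ler0n.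
rewrite -[LHS]ger0_norm; last by rewrite divr_ge0 ?sqrtr_ge0 // mulr_ge0 // ltW.
rewrite -sqrtr_sqr expr_div_n sqr_sqrtr ?ltW // alphaE; congr Num.sqrt.
by field; rewrite !gt_eqF ?ltr0n.
Qed.

Lemma PEP_T_closed w1 w2 wS : (0 < w1 + w2 + wS)%N ->
  PEP_T gamma w1 w2 wS = PEP_closed gamma w1 w2 wS.
Proof.
move=> w_gt0; rewrite /PEP_T factorsE.
case Es : (nseq w1 (1, 1) ++ nseq w2 (0, 1) ++ nseq wS (0, 4))%N => [|p s].
  by move/(congr1 size): Es; rewrite !size_cat !size_nseq /=; lia.
have [fstE sndE] : sumn (map fst (p :: s)) = w1 /\
    sumn (map snd (p :: s)) = (w1 + w2 + 4 * wS)%N.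
  by rewrite -Es !map_cat !map_nseq !sumn_cat !sumn_nseq /=; split; lia.
rewrite /= (convl_binmix _ alpha_gt0); last by rewrite -Es !all_cat !all_nseq /= !orbT.
have n_gt0 : (0 < w1 + w2 + 4 * wS)%N by lia.
rewrite fstE sndE (Rintegral_binmix_tail _ alpha_gt0 w1 _ n_gt0).
by congr (_ * _); apply: eq_bigr => j _; rewrite (binmix_tail_argE _ j n_gt0).
Qed.
End PairwiseErrorProbability.

Theorem theorem1 (R : realType) (C : conv_code) (gamma : R) (hgamma : 0 < gamma) :
  (\esum_(w in [set w : nat * nat * nat | (0 < w.1.1 + w.1.2 + w.2)%N])
     (beta C R w.1.1 w.1.2 w.2 * (PEP_T gamma w.1.1 w.1.2 w.2)%:E))%E
  =
  (\esum_(w in [set w : nat * nat * nat | (0 < w.1.1 + w.1.2 + w.2)%N])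
     (beta C R w.1.1 w.1.2 w.2 * (PEP_closed gamma w.1.1 w.1.2 w.2)%:E))%E.
Proof. by apply: eq_esum => w /= w_gt0; rewrite PEP_T_closed. Qed.
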